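(* Let $f=\frac1n\sum_{i=1}^nf_i$ with each $f_i$ differentiable with $\|\nabla f_i\|\le G_i$ and $\nabla f_i$ $L_i$-Lipschitz, $\tilde L=\frac1n\sum_iL_i>0$, $r:\mathbb{R}^d\to\mathbb{R}$ with existing proximal mapping, $F=f+r$. Fix a proper sampling with marginals $p_i$, pair matrix $\mathbf P$, a vector $v$ with $\mathbf P-pp^\top\preceq\mathrm{Diag}(p_1v_1,\dots,p_nv_n)$, and $Q=\sum_{i=1}^n\frac{v_iL_i^2}{p_in^2}$. Let $\eta>0$ and $m\ge1$ satisfy $\frac12(\frac1\eta-2\tilde L)-\frac{mQ}{2\tilde L}>0$. Then for the iterates of ProxSARAH-AS, for every $j\ge1$, $$\sum_{t=1}^mE\big[\|x_{t+1}^{(j)}-x_t^{(j)}\|^2\big]\le\frac{1}{\frac12(\frac1\eta-2\tilde L)-\frac{mQ}{2\tilde L}}E\big[F(x_0^{(j)})-F(x_{m+1}^{(j)})\big].$$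
   Context: A sampling is a random subset $S\subseteq[n]$ with $p_i=\mathrm{Prob}(i\in S)>0$, $\mathbf P_{ij}=\mathrm{Prob}(\{i,j\}\subseteq S)$; $\preceq$ is the positive semidefinite order. $\mathrm{prox}_{\eta r}(y)=\arg\min_x\{\frac1{2\eta}\|x-y\|^2+r(x)\}$. ProxSARAH-AS: for $j=1,2,\dots$: $x_0^{(j)}=\tilde x^{(j)}$, $\mathcal V_0^{(j)}=\frac1n\sum_i\nabla f_i(x_0^{(j)})$, $x_1^{(j)}=x_0^{(j)}$; for $t=1,\dots,m$: draw $S_t^{(j)}$ independently of the past, $\mathcal V_t^{(j)}=\sum_{i\in S_t^{(j)}}\frac1{np_i}(\nabla f_i(x_t^{(j)})-\nabla f_i(x_{t-1}^{(j)}))+\mathcal V_{t-1}^{(j)}$, $x_{t+1}^{(j)}\in\mathrm{prox}_{\eta r}(x_t^{(j)}-\eta\mathcal V_t^{(j)})$; then $\tilde x^{(j+1)}=x_{m+1}^{(j)}$. *)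

From HB Require Import structures.
From mathcomp Require Import all_boot all_order all_algebra.
From mathcomp Require Import all_classical all_reals all_analysis.
Set Implicit Arguments. Unset Strict Implicit. Unset Printing Implicit Defensive.
Import Order.TTheory GRing.Theory Num.Theory.
Import numFieldNormedType.Exports.
Local Open Scope ring_scope.

Section Defs.
Variable R : realType.

Definition dotv (d : nat) (x y : 'rV[R]_d) : R := \sum_(k < d) x 0 k * y 0 k.
Definition sqnorm (d : nat) (x : 'rV[R]_d) : R := dotv x x.
Definition enorm (d : nat) (x : 'rV[R]_d) : R := Num.sqrt (sqnorm x).

Definition psd_le (n : nat) (A B : 'M[R]_n) : Prop :=
  forall h : 'cV[R]_n, 0 <= (h^T *m (B - A) *m h) 0 0.

Definition is_sampling (n : nat) (pS : {set 'I_n} -> R) : Prop :=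
  (forall S, 0 <= pS S) /\ \sum_(S : {set 'I_n}) pS S = 1.

Definition marg (n : nat) (pS : {set 'I_n} -> R) (i : 'I_n) : R :=
  \sum_(S : {set 'I_n} | i \in S) pS S.
Definition pairmx (n : nat) (pS : {set 'I_n} -> R) : 'M[R]_n :=
  \matrix_(i, j) \sum_(S : {set 'I_n} | (i \in S) && (j \in S)) pS S.
Definition margv (n : nat) (pS : {set 'I_n} -> R) : 'cV[R]_n :=
  \col_i marg pS i.

Definition proper_sampling (n : nat) (pS : {set 'I_n} -> R) : Prop :=
  is_sampling pS /\ forall i, 0 < marg pS i.

(* px is a selection of the proximal mapping prox_{eta r} *)
Definition is_prox_sel (d : nat) (eta : R) (r : 'rV[R]_d -> R)
  (px : 'rV[R]_d -> 'rV[R]_d) : Prop :=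
  forall y z, (2 * eta)^-1 * sqnorm (px y - y) + r (px y)
              <= (2 * eta)^-1 * sqnorm (z - y) + r z.

Variables (n d : nat) (g : 'I_n -> 'rV[R]_d -> 'rV[R]_d)
  (pS : {set 'I_n} -> R) (eta : R) (px : 'rV[R]_d -> 'rV[R]_d).

Definition fullgrad (x : 'rV[R]_d) : 'rV[R]_d := n%:R^-1 *: \sum_i g i x.

(* inner loop of one epoch started at x0, with samples ws 0, ws 1, ...
   (ws (t-1) is S_t).  state t = (x_t, x_{t+1}, V_t). *)
Fixpoint sarah_state (x0 : 'rV[R]_d) (ws : nat -> {set 'I_n}) (t : nat)
  : 'rV[R]_d * 'rV[R]_d * 'rV[R]_d :=
  match t with
  | 0 => (x0, x0, fullgrad x0)
  | t'.+1 =>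
      let: (a, b, V) := sarah_state x0 ws t' in
      let V' := \sum_(i in ws t') (n%:R * marg pS i)^-1 *: (g i b - g i a) + V in
      (b, px (b - eta *: V'), V')
  end.

Definition sarah_x (x0 : 'rV[R]_d) (ws : nat -> {set 'I_n}) (t : nat)
  : 'rV[R]_d := (sarah_state x0 ws t).1.1.

(* starting point tilde x^{(j+1)} of epoch j+1 (epochs numbered from 1):
   epoch j (1-based) uses samples ws ((j-1)*m + t - 1), t = 1..m *)
Fixpoint epoch_start (m : nat) (xinit : 'rV[R]_d) (ws : nat -> {set 'I_n})
  (j : nat) : 'rV[R]_d :=
  match j with
  | 0 => xinit
  | j'.+1 => sarah_x (epoch_start m xinit ws j') (fun k => ws (j' * m + k)) m.+1
  end.

Definition iter_x (m : nat) (xinit : 'rV[R]_d) (ws : nat -> {set 'I_n})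
  (j t : nat) : 'rV[R]_d :=
  sarah_x (epoch_start m xinit ws j.-1) (fun k => ws (j.-1 * m + k)) t.

(* expectation of X over N i.i.d. draws S from pS (later draws unused) *)
Definition expect (N : nat) (X : (nat -> {set 'I_n}) -> R) : R :=
  \sum_(w : {ffun 'I_N -> {set 'I_n}})
     (\prod_(k < N) pS (w k)) *
     X (fun k => if insub k is Some k' then w k' else finset.set0).

End Defs.

From HB Require Import structures.
From mathcomp Require Import all_boot all_order all_algebra.
From mathcomp Require Import all_classical all_reals all_analysis.
From mathcomp Require Import ring lra.
Set Implicit Arguments. Unset Strict Implicit. Unset Printing Implicit Defensive.
Import Order.TTheory GRing.Theory Num.Theory.
Import numFieldNormedType.Exports.
Local Open Scope ring_scope.

(* Within an epoch, the proximal step taken with the estimator V_t satisfies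
     c0 |x_{t+1} - x_t|^2 - |grad f(x_t) - V_t|^2 / (2 Lt) <= F(x_t) - F(x_{t+1}),
   c0 = (1/eta - 2 Lt) / 2, by the descent lemma for f and Young's inequality.  Redrawing the
   t-th sample, the ESO inequality P - p p^T <= Diag(p v) shows that the estimator error
   E|grad f(x_t) - V_t|^2 grows by at most Q E|x_{t+1} - x_t|^2 per step; it vanishes at t = 0,
   so it never exceeds Q times the sum of all squared steps of the epoch.  Summing the one-step
   inequality over t = 1..m and telescoping F gives the bound. *)

Section InnerProduct.
Variables (R : realType) (d : nat).
Implicit Types (x y z : 'rV[R]_d) (a : R).

Lemma dotvC x y : dotv x y = dotv y x.
Proof. by apply: eq_bigr => k _; rewrite mulrC. Qed.

Lemma dotvDl x y z : dotv (x + y) z = dotv x z + dotv y z.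
Proof. by rewrite /dotv -big_split; apply: eq_bigr => k _; rewrite mxE mulrDl. Qed.

Lemma dotvZl a x z : dotv (a *: x) z = a * dotv x z.
Proof. by rewrite /dotv mulr_sumr; apply: eq_bigr => k _; rewrite mxE mulrA. Qed.

Lemma dotvBl x y z : dotv (x - y) z = dotv x z - dotv y z.
Proof. by rewrite -scaleN1r dotvDl dotvZl mulN1r. Qed.

Lemma dotvDr x y z : dotv z (x + y) = dotv z x + dotv z y.
Proof. by rewrite dotvC dotvDl !(dotvC z). Qed.

Lemma dotvBr x y z : dotv z (x - y) = dotv z x - dotv z y.
Proof. by rewrite dotvC dotvBl !(dotvC z). Qed.

Lemma dotvZr a x z : dotv z (a *: x) = a * dotv z x.
Proof. by rewrite dotvC dotvZl dotvC. Qed.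

Lemma dotv0l z : dotv 0 z = 0.
Proof. by rewrite -(scale0r 0) dotvZl mul0r. Qed.

Lemma dotv_suml (I : finType) (F : I -> 'rV[R]_d) z :
  dotv (\sum_i F i) z = \sum_i dotv (F i) z.
Proof.
by rewrite /dotv exchange_big; apply: eq_bigr => k _; rewrite summxE mulr_suml.
Qed.

Lemma sqnormE x : sqnorm x = \sum_k x 0 k ^+ 2.
Proof. by apply: eq_bigr => k _; rewrite expr2. Qed.

Lemma sqnorm_ge0 x : 0 <= sqnorm x.
Proof. by rewrite sqnormE; apply: sumr_ge0 => k _; apply: sqr_ge0. Qed.

Lemma sqnorm0 : sqnorm (0 : 'rV[R]_d) = 0.
Proof. exact: dotv0l. Qed.

Lemma sqnorm_eq0 x : sqnorm x = 0 -> x = 0.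
Proof.
rewrite sqnormE => /eqP; rewrite psumr_eq0 => [/allP x0|k _]; last exact: sqr_ge0.
apply/rowP => k; rewrite mxE; apply/eqP; rewrite -sqrf_eq0.
exact: implyP (x0 k (mem_index_enum k)) isT.
Qed.

Lemma sqr_enorm x : enorm x ^+ 2 = sqnorm x.
Proof. by rewrite sqr_sqrtr // sqnorm_ge0. Qed.

Lemma enorm_ge0 x : 0 <= enorm x.
Proof. exact: sqrtr_ge0. Qed.

Lemma sqnormD x y : sqnorm (x + y) = sqnorm x + 2 * dotv x y + sqnorm y.
Proof. rewrite /sqnorm !dotvDl !dotvDr (dotvC y x); ring. Qed.

Lemma sqnormB x y : sqnorm (x - y) = sqnorm x - 2 * dotv x y + sqnorm y.
Proof. rewrite /sqnorm !dotvBl !dotvBr (dotvC y x); ring. Qed.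

Lemma sqnormZ a x : sqnorm (a *: x) = a ^+ 2 * sqnorm x.
Proof. rewrite /sqnorm dotvZl dotvZr; ring. Qed.

Lemma enormZ a x : enorm (a *: x) = `|a| * enorm x.
Proof. by rewrite /enorm sqnormZ sqrtrM ?sqr_ge0 // sqrtr_sqr. Qed.

Lemma cauchy_schwarz x y : dotv x y <= enorm x * enorm y.
Proof.
have enorm0 z : enorm z = 0 -> z = 0.
  by move=> z0; apply: sqnorm_eq0; rewrite -sqr_enorm z0 expr0n.
have [/enorm0 ->|] := eqVneq (enorm x) 0; first by rewrite dotv0l mulr_ge0 ?enorm_ge0.
have [/enorm0 ->|] := eqVneq (enorm y) 0.
  by rewrite dotvC dotv0l mulr_ge0 ?enorm_ge0.
move=> ny nx; have xy_gt0 : 0 < enorm x * enorm y.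
  by rewrite mulr_gt0 // lt_neqAle eq_sym ?nx ?ny enorm_ge0.
rewrite -(ler_pM2l xy_gt0).
have := sqnorm_ge0 (enorm y *: x - enorm x *: y).
rewrite sqnormB !sqnormZ dotvZl dotvZr -!sqr_enorm; nra.
Qed.

End InnerProduct.

Section DescentLemma.
Variables (R : realType) (d : nat).
Variables (f : 'rV[R]_d -> R) (g : 'rV[R]_d -> 'rV[R]_d) (L : R).
Hypothesis f_diff : forall x, differentiable f x.
Hypothesis f_grad : forall x h, 'd f x h = dotv (g x) h.
Hypothesis g_lip : forall x y, enorm (g x - g y) <= L * enorm (x - y).

Lemma is_derive_line (x h : 'rV[R]_d) (s : R) :
  is_derive s 1 (fun s : R => f (x + s *: h)) (dotv (g (x + s *: h)) h).
Proof.
have quotientE : (fun t : R => t^-1 *: (f (x + (t *: 1 + s) *: h) - f (x + s *: h))) =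
         (fun t : R => t^-1 *: ((f \o shift (x + s *: h)) (t *: h) - f (x + s *: h))).
  apply: funext => t /=; congr (_ *: (f _ - _)).
  by rewrite scalerDl addrCA; congr (_ *: _ + _); exact: mulr1.
apply: DeriveDef; first by rewrite /derivable quotientE; apply: diff_derivable.
by rewrite /derive quotientE -/(derive f _ h) deriveE.
Qed.

(* Mean value theorem for [s |-> f (x + s h)] minus its quadratic model on [0, 1]. *)
Lemma descent_lemma x y :
  f y <= f x + dotv (g x) (y - x) + L / 2 * sqnorm (y - x).
Proof.
set h := y - x; set a := dotv (g x) h; set b := L / 2 * sqnorm h.
pose phi := (fun s : R => f (x + s *: h)) - (a \*: (@id R) + b \*: (@id R * @id R)).
pose phi' s := dotv (g (x + s *: h)) h - (a *: 1 + b *: (s *: 1 + s *: 1)).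
have phi_der (s : R) : is_derive s 1 phi (phi' s).
  by apply: is_deriveB; apply: is_derive_line.
have [c] := @MVT R phi phi' 0 1 ltr01 (fun s _ => phi_der s)
  (derivable_within_continuous (fun s _ => @ex_derive _ _ _ _ _ _ _ (phi_der s))).
rewrite in_itv /= => /andP[c_gt0 _] mvt.
have grad_growth : dotv (g (x + c *: h)) h <= a + L * c * sqnorm h.
  rewrite -[dotv _ h](subrK a) addrC lerD2l -dotvBl.
  apply: le_trans (cauchy_schwarz _ _) _.
  rewrite -sqr_enorm expr2 mulrA ler_wpM2r ?enorm_ge0 // -mulrA.
  by have := g_lip (x + c *: h) x; rewrite addrAC subrr add0r enormZ gtr0_norm.
(* [mvt] with the pointwise operations on functions evaluated *)
have {mvt} : f (x + 1 *: h) - (a * 1 + b * (1 * 1)) - (f (x + 0 *: h) - (a * 0 + b * (0 * 0)))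
    = (dotv (g (x + c *: h)) h - (a * 1 + b * (c * 1 + c * 1))) * (1 - 0) := mvt.
have -> : x + 1 *: h = y by rewrite scale1r /h addrC subrK.
rewrite scale0r addr0.
have := sqnorm_ge0 h; rewrite /b; nra.
Qed.

End DescentLemma.

Definition replace_at (T : Type) (ws : nat -> T) (k : nat) (S : T) : nat -> T :=
  fun k' => if k' == k then S else ws k'.

Section Expectation.
Variables (R : realType) (n : nat) (pS : {set 'I_n} -> R).
Hypothesis pS_ge0 : forall S, 0 <= pS S.
Hypothesis pS_sum : \sum_S pS S = 1.
Implicit Types (N : nat) (X Y : (nat -> {set 'I_n}) -> R).

Lemma eq_expect N X Y : X =1 Y -> expect pS N X = expect pS N Y.
Proof. by move=> XY; apply: eq_bigr => w _; rewrite XY. Qed.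

Lemma le_expect N X Y : (forall ws, X ws <= Y ws) -> expect pS N X <= expect pS N Y.
Proof.
by move=> XY; apply: ler_sum => w _; rewrite ler_wpM2l ?prodr_ge0.
Qed.

Lemma expect0 N : expect pS N (fun _ => 0) = 0.
Proof. by apply: big1 => w _; rewrite mulr0. Qed.

Lemma expect_eq0 N X : (forall ws, X ws = 0) -> expect pS N X = 0.
Proof. by move=> X0; rewrite (eq_expect _ X0) expect0. Qed.

Lemma expect_ge0 N X : (forall ws, 0 <= X ws) -> 0 <= expect pS N X.
Proof. by move=> X_ge0; rewrite -(expect0 N) le_expect. Qed.

Lemma expectD N X Y :
  expect pS N (fun ws => X ws + Y ws) = expect pS N X + expect pS N Y.
Proof. by rewrite /expect -big_split; apply: eq_bigr => w _; rewrite mulrDr. Qed.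

Lemma expectZl N c X : expect pS N (fun ws => c * X ws) = c * expect pS N X.
Proof. by rewrite /expect mulr_sumr; apply: eq_bigr => w _; rewrite mulrCA. Qed.

Lemma expectB N X Y :
  expect pS N (fun ws => X ws - Y ws) = expect pS N X - expect pS N Y.
Proof.
rewrite -mulN1r -expectZl -expectD.
by apply: eq_expect => ws; rewrite mulN1r.
Qed.

Lemma expect_sum N (I : Type) (r : seq I) (P : pred I) (X : I -> (nat -> {set 'I_n}) -> R) :
  expect pS N (fun ws => \sum_(i <- r | P i) X i ws) = \sum_(i <- r | P i) expect pS N (X i).
Proof. by rewrite /expect exchange_big; apply: eq_bigr => w _; rewrite mulr_sumr. Qed.

(* Redrawing sample k0 independently does not change the law of the samples:
   (w, S) |-> (w with S at k0, w k0) is a weight-preserving involution. *)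
Lemma expect_resample N (k0 : 'I_N) X :
  expect pS N X =
  expect pS N (fun ws => \sum_S pS S * X (replace_at ws k0 S)).
Proof.
pose ext (w : {ffun 'I_N -> {set 'I_n}}) k :=
  if insub k is Some k' then w k' else finset.set0.
pose upd (w : {ffun 'I_N -> {set 'I_n}}) S := [ffun k => if k == k0 then S else w k].
have ext_upd w S : replace_at (ext w) k0 S = ext (upd w S).
  apply: funext => k; rewrite /replace_at /ext.
  case: insubP => [k' _ <-|]; first by rewrite ffunE.
  by case: eqP => // -> /negP; rewrite ltn_ord.
have updK w S : upd (upd w S) (w k0) = w.
  by apply/ffunP => k; rewrite !ffunE; case: eqVneq => [->|].
have weight_upd w S : (\prod_(k < N) pS (upd w S k)) * pS (w k0) =
                      (\prod_(k < N) pS (w k)) * pS S.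
  rewrite (bigD1 k0) // [in RHS](bigD1 k0) //= ffunE eqxx.
  rewrite (eq_bigr (fun k => pS (w k))) => [|k /negbTE kk]; last by rewrite ffunE kk.
  ring.
pose swap (p : {ffun 'I_N -> {set 'I_n}} * {set 'I_n}) := (upd p.1 p.2, p.1 k0).
have swapK : involutive swap by move=> [w S]; rewrite /swap /= updK ffunE eqxx.
rewrite /expect; under [RHS]eq_bigr => w _ do rewrite mulr_sumr.
rewrite pair_big /= (reindex_inj (inv_inj swapK)) /=.
transitivity (\sum_(p : {ffun 'I_N -> {set 'I_n}} * {set 'I_n})
   (\prod_(k < N) pS (p.1 k)) * pS p.2 * X (ext p.1)); last first.
  by apply: eq_bigr => [[w S]] _ /=; rewrite ext_upd updK mulrA -weight_upd.
rewrite -(pair_big predT predT (fun (w : {ffun 'I_N -> {set 'I_n}}) S => \prod_(k < N) pS (w k) * pS S * X (ext w))) /=.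
by apply: eq_bigr => w _; rewrite -mulr_suml -mulr_sumr pS_sum mulr1.
Qed.

End Expectation.

Lemma quad_formE (R : comPzRingType) (n : nat) (M : 'M[R]_n) (h : 'cV[R]_n) :
  (h^T *m M *m h) 0 0 = \sum_i \sum_j h i 0 * M i j * h j 0.
Proof.
rewrite mxE exchange_big; apply: eq_bigr => j _; rewrite mxE mulr_suml.
by apply: eq_bigr => i _; rewrite mxE.
Qed.

Section SamplingVariance.
Variables (R : realType) (n : nat) (pS : {set 'I_n} -> R) (v : 'I_n -> R).
Hypothesis pS_ge0 : forall S, 0 <= pS S.
Hypothesis pS_sum : \sum_S pS S = 1.
Hypothesis eso : psd_le (pairmx pS - margv pS *m (margv pS)^T)
                        (diag_mx (\row_i (marg pS i * v i))).
Local Notation p := (marg pS).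

Lemma eso_quad (b : 'I_n -> R) :
  \sum_i \sum_j (pairmx pS i j - p i * p j) * b i * b j <= \sum_i p i * v i * b i ^+ 2.
Proof.
have := eso (\col_i b i); rewrite quad_formE.
under eq_bigr => i _ do under eq_bigr => j _ do rewrite !mxE big_ord1 !mxE mulrBr mulrBl.
under eq_bigr => i _ do rewrite sumrB.
rewrite sumrB subr_ge0; congr (_ <= _).
  by apply: eq_bigr => i _; apply: eq_bigr => j _; rewrite !mxE; ring.
apply: eq_bigr => i _; rewrite (bigD1 i) //= big1 ?addr0 => [|j /negbTE ji].
  by rewrite eqxx mulr1n; ring.
by rewrite eq_sym ji mulr0n mulr0 mul0r.
Qed.

Lemma pairmx_diag i : pairmx pS i i = p i.
Proof. by rewrite mxE; apply: eq_bigl => S; rewrite andbb. Qed.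

Lemma marg_le1 i : p i <= 1.
Proof.
rewrite -pS_sum /marg big_mkcond /=; apply: ler_sum => S _.
by case: (i \in S).
Qed.

Lemma eso_ge0 i : 0 < p i -> 0 <= v i.
Proof.
move=> p_gt0; have := eso_quad (fun j => (j == i)%:R).
have sum_delta (F : 'I_n -> R) : \sum_j F j * (j == i)%:R = F i.
  rewrite (bigD1 i) //= eqxx mulr1 big1 ?addr0 // => j /negbTE ->.
  by rewrite mulr0.
under eq_bigr => k _ do rewrite sum_delta.
under [X in _ <= X -> _]eq_bigr => k _ do rewrite expr2 mulrA.
rewrite !sum_delta eqxx !mulr1 pairmx_diag => cov_le.
have : 0 <= p i * v i by have := marg_le1 i; nra.
by rewrite pmulr_rge0.
Qed.

Lemma sampling_mean (b : 'I_n -> R) :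
  \sum_S pS S * \sum_(i in S) b i = \sum_i p i * b i.
Proof.
under eq_bigr => S _ do rewrite big_mkcond mulr_sumr.
rewrite exchange_big; apply: eq_bigr => i _.
rewrite /marg mulr_suml [RHS]big_mkcond; apply: eq_bigr => S _ /=.
by case: (i \in S); rewrite ?mulr1 ?mulr0 ?mul0r.
Qed.

Lemma sampling_second_moment (b : 'I_n -> R) :
  \sum_S pS S * (\sum_(i in S) b i) ^+ 2 = \sum_i \sum_j pairmx pS i j * b i * b j.
Proof.
have indicatorE (S : {set 'I_n}) : \sum_(i in S) b i = \sum_i (i \in S)%:R * b i.
  by rewrite big_mkcond; apply: eq_bigr => i _; case: (i \in S); rewrite ?mul1r ?mul0r.
under eq_bigr => S _ do rewrite indicatorE expr2 mulr_suml mulr_sumr.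
under eq_bigr => S _ do under eq_bigr => i _ do rewrite !mulr_sumr.
rewrite exchange_big; apply: eq_bigr => i _.
rewrite exchange_big; apply: eq_bigr => j _.
rewrite mxE mulr_suml mulr_suml [RHS]big_mkcond; apply: eq_bigr => S _ /=.
by case: (i \in S); case: (j \in S); rewrite /= ?mul1r ?mul0r ?mulr0 ?mulr1 ?mulrA.
Qed.

(* Second moment minus squared mean of the unbiased estimator [\sum_(i in S) b i] of
   [\sum_i p i * b i] is the quadratic form of [P - p p^T] at [b]. *)
Lemma sampling_var_le (u : R) (b : 'I_n -> R) :
  \sum_S pS S * (u + \sum_i p i * b i - \sum_(i in S) b i) ^+ 2
  <= u ^+ 2 + \sum_i p i * v i * b i ^+ 2.
Proof.
set D := \sum_i p i * b i.
have expand S : pS S * (u + D - \sum_(i in S) b i) ^+ 2 = (u + D) ^+ 2 * pS S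
    - 2 * (u + D) * (pS S * \sum_(i in S) b i) + pS S * (\sum_(i in S) b i) ^+ 2.
  by ring.
rewrite (eq_bigr _ (fun S _ => expand S)) big_split sumrB /= -!mulr_sumr pS_sum.
rewrite sampling_mean sampling_second_moment -/D mulr1.
have D2 : D ^+ 2 = \sum_i \sum_j p i * p j * b i * b j.
  rewrite expr2 mulr_suml; apply: eq_bigr => i _; rewrite mulr_sumr.
  by apply: eq_bigr => j _; ring.
have cov : \sum_i \sum_j (pairmx pS i j - p i * p j) * b i * b j
    = \sum_i \sum_j pairmx pS i j * b i * b j - D ^+ 2.
  rewrite D2 -sumrB; apply: eq_bigr => i _; rewrite -sumrB.
  by apply: eq_bigr => j _; ring.
have := eso_quad b; rewrite cov; nra.
Qed.

Lemma sampling_sqnorm_le (d : nat) (u : 'rV[R]_d) (b : 'I_n -> 'rV[R]_d) :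
  \sum_S pS S * sqnorm (u + \sum_i p i *: b i - \sum_(i in S) b i)
  <= sqnorm u + \sum_i p i * v i * sqnorm (b i).
Proof.
under eq_bigr => S _ do rewrite sqnormE mulr_sumr.
rewrite exchange_big sqnormE.
under [X in _ <= _ + X]eq_bigr => i _ do rewrite sqnormE mulr_sumr.
rewrite [X in _ <= _ + X]exchange_big -big_split /=; apply: ler_sum => k _.
have coordE S : (u + \sum_i p i *: b i - \sum_(i in S) b i) 0 k
    = u 0 k + \sum_i p i * b i 0 k - \sum_(i in S) b i 0 k.
  by rewrite !mxE !summxE; congr (_ + _ - _); apply: eq_bigr => i _; rewrite mxE.
under eq_bigr => S _ do rewrite coordE.
exact: sampling_var_le.
Qed.
End SamplingVariance.

Section ProxStep.
Variables (R : realType) (d : nat).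
Variables (f : 'rV[R]_d -> R) (g : 'rV[R]_d -> 'rV[R]_d) (r : 'rV[R]_d -> R).
Variables (px : 'rV[R]_d -> 'rV[R]_d) (L eta : R).
Hypothesis f_upper : forall x y, f y <= f x + dotv (g x) (y - x) + L / 2 * sqnorm (y - x).
Hypothesis L_gt0 : 0 < L.
Hypothesis eta_gt0 : 0 < eta.
Hypothesis prox : is_prox_sel eta r px.

(* Compare the prox objective at [y] and at [x], bound [f y] by [f_upper], and absorb the
   inexactness [<g x - V, y - x>] by Young's inequality with weight [L]. *)
Lemma prox_step_descent x V (y := px (x - eta *: V)) :
  2^-1 * (eta^-1 - 2 * L) * sqnorm (y - x) - (2 * L)^-1 * sqnorm (g x - V)
  <= (f x + r x) - (f y + r y).
Proof.
have prox_x := prox (x - eta *: V) x; rewrite -/y in prox_x.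
have shift_y : y - (x - eta *: V) = (y - x) + eta *: V by rewrite opprB addrCA addrC.
have shift_x : x - (x - eta *: V) = eta *: V by rewrite opprB addrCA subrr addr0.
have cross : (2 * eta)^-1 * (2 * (eta * dotv (y - x) V)) = dotv (y - x) V.
  by field; rewrite gt_eqF.
rewrite shift_y shift_x sqnormD sqnormZ dotvZr !mulrDr cross in prox_x.
have young := sqnorm_ge0 (g x - V - L *: (y - x)).
rewrite sqnormB sqnormZ dotvZr dotvBl (dotvC V) in young.
have f_y := f_upper x y.
set A := sqnorm (y - x) in prox_x young f_y *.
set B := dotv (y - x) V in prox_x young.
set C := dotv (g x) (y - x) in young f_y.
set E := sqnorm (g x - V) in young *.
have young' : C - B <= (2 * L)^-1 * E + L / 2 * A.
  rewrite -(ler_pM2l (mulr_gt0 (ltr0Sn _ 1) L_gt0)).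
  have -> : 2 * L * ((2 * L)^-1 * E + L / 2 * A) = E + L ^+ 2 * A.
    by field; rewrite gt_eqF.
  lra.
have -> : 2^-1 * (eta^-1 - 2 * L) * A = (2 * eta)^-1 * A - L * A.
  by field; rewrite gt_eqF.
lra.
Qed.

End ProxStep.

Section ProxSARAHIterates.
Variables (R : realType) (n d : nat) (g : 'I_n -> 'rV[R]_d -> 'rV[R]_d).
Variables (pS : {set 'I_n} -> R) (eta : R) (px : 'rV[R]_d -> 'rV[R]_d).
Local Notation sarah_state := (sarah_state g pS eta px).
Local Notation sarah_x := (sarah_x g pS eta px).

Definition sarah_V x0 ws t : 'rV[R]_d := (sarah_state x0 ws t).2.

Lemma sarah_stateE x0 ws t :
  sarah_state x0 ws t = (sarah_x x0 ws t, sarah_x x0 ws t.+1, sarah_V x0 ws t).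
Proof. by rewrite /sarah_x /sarah_V /=; case: (sarah_state x0 ws t) => [[]]. Qed.

Lemma sarah_V0 x0 ws : sarah_V x0 ws 0 = fullgrad g x0.
Proof. by []. Qed.

Lemma sarah_xS x0 ws t :
  sarah_x x0 ws t.+2 = px (sarah_x x0 ws t.+1 - eta *: sarah_V x0 ws t.+1).
Proof. by rewrite /sarah_x /sarah_V /= sarah_stateE. Qed.

Lemma sarah_VS x0 ws t :
  sarah_V x0 ws t.+1 =
  \sum_(i in ws t) (n%:R * marg pS i)^-1 *: (g i (sarah_x x0 ws t.+1) - g i (sarah_x x0 ws t))
  + sarah_V x0 ws t.
Proof. by rewrite /sarah_V /= sarah_stateE. Qed.

Lemma eq_sarah_state x0 ws1 ws2 t : (forall k, (k < t)%N -> ws1 k = ws2 k) ->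
  sarah_state x0 ws1 t = sarah_state x0 ws2 t.
Proof.
elim: t => [//|t IH] eq_ws /=.
by rewrite IH ?eq_ws // => k /ltnW; apply: eq_ws.
Qed.

Lemma eq_sarah_x x0 ws1 ws2 t : (forall k, (k < t)%N -> ws1 k = ws2 k) ->
  sarah_x x0 ws1 t.+1 = sarah_x x0 ws2 t.+1.
Proof.
move=> /(eq_sarah_state x0) /(congr1 (fun s => s.1.2)).
by rewrite !sarah_stateE.
Qed.

Lemma eq_epoch_start m xinit ws1 ws2 j : (forall k, (k < j * m)%N -> ws1 k = ws2 k) ->
  epoch_start g pS eta px m xinit ws1 j = epoch_start g pS eta px m xinit ws2 j.
Proof.
elim: j => [//|j IH] eq_ws /=.
rewrite IH => [|k km]; last by apply: eq_ws; rewrite mulSn ltn_addl.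
apply: eq_sarah_x => k km; apply: eq_ws.
by rewrite mulSn addnC ltn_add2l.
Qed.

End ProxSARAHIterates.

Section ProxSARAH.
Variables (R : realType) (n d : nat).
Variables (f : 'I_n -> 'rV[R]_d -> R) (g : 'I_n -> 'rV[R]_d -> 'rV[R]_d) (L : 'I_n -> R).
Variables (r : 'rV[R]_d -> R) (pS : {set 'I_n} -> R) (v : 'I_n -> R).
Variables (eta : R) (px : 'rV[R]_d -> 'rV[R]_d).
Hypothesis f_diff : forall i x, differentiable (f i) x.
Hypothesis f_grad : forall i x h, 'd (f i) x h = dotv (g i x) h.
Hypothesis g_lip : forall i x y, enorm (g i x - g i y) <= L i * enorm (x - y).
Hypothesis pS_ge0 : forall S, 0 <= pS S.
Hypothesis pS_sum : \sum_S pS S = 1.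
Hypothesis p_gt0 : forall i, 0 < marg pS i.
Hypothesis eso : psd_le (pairmx pS - margv pS *m (margv pS)^T)
                        (diag_mx (\row_i (marg pS i * v i))).

Local Notation Lt := (n%:R^-1 * \sum_i L i).
Hypothesis Lt_gt0 : 0 < Lt.
Hypothesis eta_gt0 : 0 < eta.
Hypothesis prox : is_prox_sel eta r px.
Local Notation F x := (n%:R^-1 * \sum_i f i x + r x).
Local Notation Q := (\sum_i v i * L i ^+ 2 / (marg pS i * n%:R ^+ 2)).

Lemma mean_descent_lemma x y :
  n%:R^-1 * \sum_i f i y
  <= n%:R^-1 * \sum_i f i x + dotv (fullgrad g x) (y - x) + Lt / 2 * sqnorm (y - x).
Proof.
have sum_descent : \sum_i f i y <= \sum_i (f i x + dotv (g i x) (y - x) + L i / 2 * sqnorm (y - x)).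
  by apply: ler_sum => i _; apply: descent_lemma.
rewrite !big_split /= -dotv_suml -!mulr_suml in sum_descent.
rewrite /fullgrad dotvZl -!mulrA -!mulrDr ler_wpM2l ?invr_ge0 ?ler0n //.
by rewrite mulrA.
Qed.

Lemma sarah_weight_ge0 i : 0 <= v i / (marg pS i * n%:R ^+ 2).
Proof.
have v_ge0 := eso_ge0 pS_ge0 pS_sum eso (p_gt0 i).
by rewrite divr_ge0 // mulr_ge0 ?exprn_ge0 // ltW.
Qed.

Lemma sarah_Q_ge0 : 0 <= Q.
Proof.
apply: sumr_ge0 => i _; rewrite mulrAC.
by rewrite mulr_ge0 ?sarah_weight_ge0 ?sqr_ge0.
Qed.

Lemma sarah_estimator_var (X Y V : 'rV[R]_d) :
  \sum_S pS S * sqnorm (fullgrad g Y -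
      (\sum_(i in S) (n%:R * marg pS i)^-1 *: (g i Y - g i X) + V))
  <= sqnorm (fullgrad g X - V) + Q * sqnorm (Y - X).
Proof.
pose b i := (n%:R * marg pS i)^-1 *: (g i Y - g i X).
have unit_i i : (n%:R != 0 :> R) && (marg pS i != 0).
  by rewrite pnatr_eq0 -lt0n (gt_eqF (p_gt0 i)) (leq_ltn_trans (leq0n i) (ltn_ord i)).
have mean_b : \sum_i marg pS i *: b i = fullgrad g Y - fullgrad g X.
  rewrite /fullgrad -scalerBr -sumrB scaler_sumr; apply: eq_bigr => i _.
  by rewrite /b scalerA; congr (_ *: _); field; apply: unit_i.
have centred S : fullgrad g Y - (\sum_(i in S) b i + V)
    = (fullgrad g X - V) + \sum_i marg pS i *: b i - \sum_(i in S) b i.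
  by rewrite mean_b [_ - V + _]addrC addrA subrK opprD addrA addrAC.
under eq_bigr => S _ do rewrite centred.
apply: le_trans (sampling_sqnorm_le pS_sum eso _ _) _; rewrite lerD2l mulr_suml.
apply: ler_sum => i _.
have lip_sq : sqnorm (g i Y - g i X) <= L i ^+ 2 * sqnorm (Y - X).
  rewrite -!sqr_enorm -exprMn ler_pXn2r ?nnegrE ?enorm_ge0 //.
  by rewrite (le_trans _ (g_lip i Y X)) ?enorm_ge0.
have -> : marg pS i * v i * sqnorm (b i)
    = v i / (marg pS i * n%:R ^+ 2) * sqnorm (g i Y - g i X).
  by rewrite sqnormZ; field; apply: unit_i.
have -> : v i * L i ^+ 2 / (marg pS i * n%:R ^+ 2) * sqnorm (Y - X)
    = v i / (marg pS i * n%:R ^+ 2) * (L i ^+ 2 * sqnorm (Y - X)) by ring.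
by rewrite ler_wpM2l ?sarah_weight_ge0.
Qed.

Local Notation sarah_x := (sarah_x g pS eta px).
Local Notation sarah_V := (sarah_V g pS eta px).

Lemma sarah_step_descent x0 ws t :
  2^-1 * (eta^-1 - 2 * Lt) * sqnorm (sarah_x x0 ws t.+2 - sarah_x x0 ws t.+1)
  - (2 * Lt)^-1 * sqnorm (fullgrad g (sarah_x x0 ws t.+1) - sarah_V x0 ws t.+1)
  <= F (sarah_x x0 ws t.+1) - F (sarah_x x0 ws t.+2).
Proof.
rewrite sarah_xS.
exact: (prox_step_descent (f := fun x => n%:R^-1 * \sum_i f i x) mean_descent_lemma).
Qed.

Section Epoch.
Variables (x0 : (nat -> {set 'I_n}) -> 'rV[R]_d) (s N : nat).
Hypothesis x0_prefix : forall ws1 ws2,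
  (forall k, (k < s)%N -> ws1 k = ws2 k) -> x0 ws1 = x0 ws2.

Local Notation xs ws t := (sarah_x (x0 ws) (fun k => ws (s + k)%N) t).
Local Notation Vs ws t := (sarah_V (x0 ws) (fun k => ws (s + k)%N) t).
Local Notation step_sq t := (expect pS N (fun ws => sqnorm (xs ws t.+1 - xs ws t))).
Local Notation grad_err t :=
  (expect pS N (fun ws => sqnorm (fullgrad g (xs ws t) - Vs ws t))).

Lemma sarah_replace_sample ws t S (ws' := replace_at ws (s + t)%N S) :
  fullgrad g (xs ws' t.+1) - Vs ws' t.+1 =
  fullgrad g (xs ws t.+1) -
  (\sum_(i in S) (n%:R * marg pS i)^-1 *: (g i (xs ws t.+1) - g i (xs ws t)) + Vs ws t).
Proof.
have state_eq : sarah_state g pS eta px (x0 ws') (fun k => ws' (s + k)%N) t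
              = sarah_state g pS eta px (x0 ws) (fun k => ws (s + k)%N) t.
  rewrite (x0_prefix (ws2 := ws)) => [|k ks]; last first.
    by rewrite /ws' /replace_at ltn_eqF ?ltn_addr.
  by apply: eq_sarah_state => k kt; rewrite /ws' /replace_at eqn_add2l ltn_eqF.
rewrite sarah_VS; move: state_eq; rewrite !sarah_stateE => -[-> -> ->].
by rewrite /ws' /replace_at eqxx.
Qed.

Lemma grad_err_succ t : (s + t < N)%N -> grad_err t.+1 <= grad_err t + Q * step_sq t.
Proof.
move=> stN; rewrite (expect_resample pS_sum (Ordinal stN)) -expectZl -expectD.
apply: (le_expect pS_ge0) => ws /=.
under eq_bigr => S _ do rewrite sarah_replace_sample.
exact: sarah_estimator_var.
Qed.

Lemma grad_err_le t : (s + t <= N)%N -> grad_err t <= Q * \sum_(0 <= k < t) step_sq k.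
Proof.
elim: t => [_|t IH stN].
  rewrite big_geq // mulr0 expect_eq0 // => ws.
  by rewrite sarah_V0 subrr sqnorm0.
rewrite addnS in stN; rewrite big_nat_recr //= mulrDr.
apply: le_trans (grad_err_succ stN) _.
by rewrite lerD2r IH // ltnW.
Qed.

Lemma grad_err_le_epoch m t : (s + m <= N)%N -> (t <= m)%N ->
  grad_err t <= Q * \sum_(1 <= k < m.+1) step_sq k.
Proof.
move=> smN tm; apply: le_trans (grad_err_le _) _; first by rewrite (leq_trans _ smN) ?leq_add2l.
rewrite ler_wpM2l ?sarah_Q_ge0 //.
have -> : \sum_(1 <= k < m.+1) step_sq k = \sum_(0 <= k < m.+1) step_sq k.
  by rewrite [RHS]big_ltn // expect_eq0 ?add0r // => ws; rewrite subrr sqnorm0.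
rewrite [X in _ <= X](big_cat_nat _ (n := t)) ?leqW //= lerDl.
by apply: sumr_ge0 => k _; apply: (expect_ge0 pS_ge0) => ws; apply: sqnorm_ge0.
Qed.

Lemma epoch_telescope m :
  \sum_(1 <= t < m.+1) expect pS N (fun ws => F (xs ws t) - F (xs ws t.+1))
  = expect pS N (fun ws => F (xs ws 0) - F (xs ws m.+1)).
Proof.
rewrite -expect_sum; apply: eq_expect => ws.
under eq_bigr => t _ do rewrite -opprB.
by rewrite sumrN telescope_sumr // opprB.
Qed.

Lemma epoch_descent m : (s + m <= N)%N ->
  (2^-1 * (eta^-1 - 2 * Lt) - m%:R * Q / (2 * Lt)) * \sum_(1 <= t < m.+1) step_sq t
  <= expect pS N (fun ws => F (xs ws 0) - F (xs ws m.+1)).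
Proof.
move=> smN; set D := \sum_(1 <= t < m.+1) step_sq t.
have average : (2^-1 * (eta^-1 - 2 * Lt) - m%:R * Q / (2 * Lt)) * D
    = \sum_(1 <= t < m.+1) (2^-1 * (eta^-1 - 2 * Lt) * step_sq t - (2 * Lt)^-1 * (Q * D)).
  rewrite sumrB -mulr_sumr sumr_const_nat subSS subn0.
  rewrite -/D -[_ *+ m]mulr_natl; set l := n%:R^-1 * _.
  by field; rewrite (gt_eqF Lt_gt0) (gt_eqF eta_gt0).
rewrite average -epoch_telescope; apply: ler_sum_nat => -[//|t] /andP[_]; rewrite ltnS => tm.
apply: le_trans (lerB (lexx _) (ler_wpM2l _ (grad_err_le_epoch smN tm))) _.
  by rewrite invr_ge0 mulr_ge0 // ltW.
rewrite -!expectZl -expectB; apply: (le_expect pS_ge0) => ws.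
exact: sarah_step_descent.
Qed.

End Epoch.

End ProxSARAH.

Unset Implicit Arguments.

Theorem lemma5p3 (R : realType) (n d : nat)
  (f : 'I_n -> 'rV[R]_d -> R) (g : 'I_n -> 'rV[R]_d -> 'rV[R]_d)
  (G L : 'I_n -> R) (r : 'rV[R]_d -> R)
  (pS : {set 'I_n} -> R) (v : 'I_n -> R)
  (eta : R) (m : nat) (px : 'rV[R]_d -> 'rV[R]_d) (xinit : 'rV[R]_d) :
  (forall i x, differentiable (f i) x) ->
  (forall i x h, 'd (f i) x h = dotv (g i x) h) ->
  (forall i x, enorm (g i x) <= G i) ->
  (forall i x y, enorm (g i x - g i y) <= L i * enorm (x - y)) ->
  let Lt := n%:R^-1 * \sum_i L i in
  0 < Lt ->
  let F := fun x => n%:R^-1 * \sum_i f i x + r x in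
  proper_sampling pS ->
  psd_le (pairmx pS - margv pS *m (margv pS)^T)
         (diag_mx (\row_i (marg pS i * v i))) ->
  let Q := \sum_i v i * L i ^+ 2 / (marg pS i * n%:R ^+ 2) in
  0 < eta -> (1 <= m)%N ->
  let c := 2^-1 * (eta^-1 - 2 * Lt) - m%:R * Q / (2 * Lt) in
  0 < c ->
  is_prox_sel eta r px ->
  forall j : nat, (1 <= j)%N ->
  \sum_(1 <= t < m.+1)
     expect pS (j * m) (fun ws => sqnorm (iter_x g pS eta px m xinit ws j t.+1
                                          - iter_x g pS eta px m xinit ws j t))
  <= c^-1 * expect pS (j * m) (fun ws =>
        F (iter_x g pS eta px m xinit ws j 0)
        - F (iter_x g pS eta px m xinit ws j m.+1)).
Proof.
move=> f_diff f_grad _ g_lip Lt Lt_gt0 F [[pS_ge0 pS_sum] p_gt0] eso Q eta_gt0 _ c c_gt0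
  prox j j_gt0.
have epoch_len : (j.-1 * m + m <= j * m)%N by rewrite -mulSnr prednK.
rewrite ler_pdivlMl //.
exact: (epoch_descent f_diff f_grad g_lip pS_ge0 pS_sum p_gt0 eso Lt_gt0 eta_gt0 prox
  (fun ws1 ws2 => @eq_epoch_start _ _ _ g pS eta px m xinit ws1 ws2 j.-1) epoch_len).
Qed.
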